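(* Let $(X,Y)$ be a centred bivariate Gaussian vector with unit variances and correlation $\rho\in[0,1)$. Let $S\subset\mathbb{R}$ be a bounded open set with Lebesgue measure $|S|<\infty$. For $u>0$ define $d(u,S)=\inf_{s\in S}|u+s|=\operatorname{dist}(-u,S)$. Then \[ \mathbb{P}(X-u\in S,\ Y-u\in S)\le\frac{|S|^2}{2\pi\sqrt{1-\rho^2}}\exp\Big(-\frac{d(u,S)^2}{1+\rho}\Big). \] *)

From HB Require Import structures.
From mathcomp Require Import all_boot all_order all_algebra.
From mathcomp Require Import all_classical all_reals all_analysis.
Set Implicit Arguments. Unset Strict Implicit. Unset Printing Implicit Defensive.
Import Order.TTheory GRing.Theory Num.Theory.
Import numFieldNormedType.Exports.
Local Open Scope classical_set_scope.
Local Open Scope ring_scope.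

Definition bivariate_normal_pdf {R : realType} (rho : R) (z : R * R) : R :=
  expR (- (z.1 ^+ 2 - 2 * rho * z.1 * z.2 + z.2 ^+ 2) / (2 * (1 - rho ^+ 2)))
  / (2 * pi * Num.sqrt (1 - rho ^+ 2)).

Definition is_std_bivariate_gaussian {d} {T : measurableType d} {R : realType}
  (P : probability T R) (X Y : T -> R) (rho : R) : Prop :=
  [/\ measurable_fun setT X, measurable_fun setT Y &
      forall A : set (R * R), measurable A ->
        P ((fun w => (X w, Y w)) @^-1` A) =
        (\int[(@lebesgue_measure R \x @lebesgue_measure R)%E]_(z in A)
            (bivariate_normal_pdf rho z)%:E)%E].

Definition dist_shift {R : realType} (u : R) (S : set R) : R :=
  inf [set `|u + s| | s in S].

From HB Require Import structures.
From mathcomp Require Import all_boot all_order all_algebra.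
From mathcomp Require Import all_classical all_reals all_analysis.
From mathcomp Require Import ring lra measurable_realfun.
Import Order.TTheory GRing.Theory Num.Theory.
Import numFieldNormedType.Exports.
Local Open Scope classical_set_scope.
Local Open Scope ring_scope.

(* On the event, (X, Y) lies in (S + u)^2, where |x|, |y| >= d(u, S).  There the
   quadratic form x^2 - 2 rho x y + y^2 = (1 - rho)(x^2 + y^2) + rho (x - y)^2 is at
   least 2 (1 - rho) d(u, S)^2, so the density is at most
   exp(-d(u, S)^2 / (1 + rho)) / (2 pi sqrt(1 - rho^2)).  Integrating this constant
   over (S + u)^2, of measure |S|^2 by translation invariance, gives the bound. *)

Lemma lebesgue_measure_preimage_addr (R : realType) (a : R) (A : set R) :
  measurable A -> lebesgue_measure ((fun x => x + a) @^-1` A) = lebesgue_measure A.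
Proof.
have mf : measurable_fun [set: R] (fun x => x + a) by apply: measurable_funD.
move=> mA.
(* the pushforward is a measure only given [mf], so its instance must be named *)
pose mu := @measure_function_pushforward__canonical__measure_function_Measure
  _ _ (measurableTypeR R) (measurableTypeR R) R lebesgue_measure _ mf.
rewrite (@lebesgue_measure_unique _ mu _ _ mA) //.
move=> _ [[b c] _ <-] /=; rewrite /pushforward.
have -> : (fun x => x + a) @^-1` `]b, c]%classic = `](b - a), (c - a)]%classic.
  by apply/seteqP; split => x /=; rewrite !in_itv /= ltrBlDr lerBrDr.
rewrite !lebesgue_measure_itv /= !lte_fin ltrD2r; case: ifP => // _.
by rewrite -!EFinD opprB addrA subrK.
Qed.

Lemma measurable_bivariate_normal_pdf (R : realType) (rho : R) :
  measurable_fun [set: R * R] (bivariate_normal_pdf rho).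
Proof.
apply: measurable_funM => //; apply: measurableT_comp => //.
apply: measurable_funM => //; apply: measurableT_comp => //.
apply: measurable_funD; last exact: measurable_funX.
apply: measurable_funB; first exact: measurable_funX.
by apply: measurable_funM => //; apply: measurable_funM.
Qed.

Lemma bivariate_normal_pdf_ge0 (R : realType) (rho : R) (z : R * R) :
  0 <= bivariate_normal_pdf rho z.
Proof. by rewrite divr_ge0 ?expR_ge0 ?mulr_ge0 ?pi_ge0 ?sqrtr_ge0. Qed.

Lemma quad_form_ge (R : realDomainType) (rho d x y : R) :
  0 <= rho <= 1 -> 0 <= d -> d <= `|x| -> d <= `|y| ->
  2 * (1 - rho) * d ^+ 2 <= x ^+ 2 - 2 * rho * x * y + y ^+ 2.
Proof.
case/andP=> rho0 rho1 d0 dx dy.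
have sqr_le z : d <= `|z| -> d ^+ 2 <= z ^+ 2.
  by move=> dz; rewrite -real_normK ?num_real // lerXn2r ?nnegrE.
have -> : x ^+ 2 - 2 * rho * x * y + y ^+ 2
          = (1 - rho) * (x ^+ 2 + y ^+ 2) + rho * (x - y) ^+ 2 by ring.
have := sqr_le _ dx; have := sqr_le _ dy; have := sqr_ge0 (x - y); nra.
Qed.

Lemma bivariate_normal_pdf_le (R : realType) (rho d : R) (z : R * R) :
  0 <= rho < 1 -> 0 <= d -> d <= `|z.1| -> d <= `|z.2| ->
  bivariate_normal_pdf rho z
  <= expR (- d ^+ 2 / (1 + rho)) / (2 * pi * Num.sqrt (1 - rho ^+ 2)).
Proof.
case/andP=> rho0 rho1 d0 dz1 dz2.
have rho2 : 0 < 1 - rho ^+ 2 by rewrite subr_gt0 expr_lt1.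
rewrite ler_wpM2r ?invr_ge0 ?mulr_ge0 ?pi_ge0 ?sqrtr_ge0 // ler_expR.
have -> : - d ^+ 2 / (1 + rho) = - (2 * (1 - rho) * d ^+ 2) / (2 * (1 - rho ^+ 2)).
  by field; rewrite -?subr_sqr ?lt0r_neq0 //; lra.
rewrite !mulNr lerN2 ler_pM2r ?invr_gt0 ?mulr_gt0 //.
by apply: quad_form_ge => //; rewrite rho0 ltW.
Qed.

Lemma dist_shift_le (R : realType) (u s : R) (S : set R) :
  S s -> dist_shift u S <= `|u + s|.
Proof. by move=> Ss; apply: ge_inf; [exists 0 => _ [t _ <-] | exists s]. Qed.

Lemma dist_shift_ge0 (R : realType) (u : R) (S : set R) : 0 <= dist_shift u S.
Proof.
have [->|/set0P[s Ss]] := eqVneq S set0; first by rewrite /dist_shift image_set0 inf0.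
apply: lb_le_inf => [|_ [t _ <-] //]; by exists `|u + s|, s.
Qed.

Theorem lemma2p4 (d : measure_display) (T : measurableType d) (R : realType)
  (P : probability T R) (X Y : T -> R) (rho : R)
  (hrho : 0 <= rho < 1) (hXY : is_std_bivariate_gaussian P X Y rho)
  (S : set R) (hSo : open S) (hSb : bounded_set S)
  (hSm : (@lebesgue_measure R S < +oo)%E) (u : R) (hu : 0 < u) :
  (P [set w | S (X w - u)%R /\ S (Y w - u)%R] <=
   ((fine (@lebesgue_measure R S)) ^+ 2 / (2 * pi * Num.sqrt (1 - rho ^+ 2))
      * expR (- (dist_shift u S) ^+ 2 / (1 + rho)))%:E)%E.
Proof.
case: hXY => _ _ lawXY.
have mS : measurable S := open_measurable hSo.
set Su := (fun x => x - u) @^-1` S.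
have mSu : measurable Su by rewrite -[Su]setTI; apply: measurable_funD.
have mSu2 : measurable (Su `*` Su) := measurableX mSu mSu.
pose M := expR (- dist_shift u S ^+ 2 / (1 + rho))
          / (2 * pi * Num.sqrt (1 - rho ^+ 2)).
rewrite -/((fun w => (X w, Y w)) @^-1` (Su `*` Su)) lawXY //.
apply: (@le_trans _ _
  (\int[(lebesgue_measure \x lebesgue_measure)%E]_(z in Su `*` Su) (cst M%:E) z)%E).
  apply: ge0_le_integral => //=.
  - by move=> z _; rewrite lee_fin bivariate_normal_pdf_ge0.
  - by apply/measurable_EFinP/measurable_funTS; exact: measurable_bivariate_normal_pdf.
  move=> z [Sz1 Sz2]; rewrite lee_fin bivariate_normal_pdf_le ?dist_shift_ge0 //.
    by rewrite -[in leRHS](subrK u z.1) addrC dist_shift_le.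
  by rewrite -[in leRHS](subrK u z.2) addrC dist_shift_le.
rewrite integral_cst //.
rewrite [X in (_ * X)%E](_ : _ = lebesgue_measure Su * lebesgue_measure Su)%E;
  last exact: product_measure1E.
rewrite lebesgue_measure_preimage_addr //.
have finS : lebesgue_measure S \is a fin_num by rewrite ge0_fin_numE.
by rewrite -(fineK finS) -!EFinM lee_fin /M -expr2 mulrC mulrA mulrAC.
Qed.
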